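(* Let a regular network on $n$ cells with adjacency matrix $A$ be given. There exists a 2-dimensional synchrony subspace if and only if $A$ has an eigenvector $w\in\mathbb{C}^n$ whose coordinates take exactly two distinct values.
   Context: A regular network is a finite directed graph on cells $1,\dots,n$ (loops and multiple arrows allowed) in which every cell receives the same number $v$ of arrows (the valency). Its adjacency matrix $A=[a_{ij}]$ has $a_{ij}$ equal to the number of arrows cell $i$ receives from cell $j$; every row sum is $v$. $A$ acts on $\mathbb{C}^n$. A polydiagonal is a subspace of $\mathbb{C}^n$ of the form $\{x : x_i=x_j \text{ for all } (i,j)\in R\}$ for some (possibly empty) set $R$ of index pairs. A synchrony subspace is a polydiagonal that is invariant under $A$. *)

From HB Require Import structures.
From mathcomp Require Import all_boot all_order all_algebra.
Set Implicit Arguments. Unset Strict Implicit. Unset Printing Implicit Defensive.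
Import Order.TTheory GRing.Theory Num.Theory.
Local Open Scope ring_scope.

(* A network on cells 'I_n is given by its adjacency matrix A : 'M[nat]_n,
   A i j = number of arrows cell i receives from cell j (loops and multiple
   arrows allowed). *)
Definition regular_network (n : nat) (A : 'M[nat]_n) : Prop :=
  exists v : nat, forall i : 'I_n, (\sum_(j < n) A i j)%N = v.

Definition adjC (C : fieldType) (n : nat) (A : 'M[nat]_n) : 'M[C]_n :=
  map_mx (fun k : nat => k%:R) A.

(* Subspaces of C^n are represented, as in mxalgebra, by the row space of a
   square matrix S; vectors of C^n are then row vectors x : 'rV_n. *)

Definition polydiagonal (C : fieldType) (n : nat) (S : 'M[C]_n) : Prop :=
  exists R : rel 'I_n, forall x : 'rV[C]_n,
    (x <= S)%MS <-> (forall i j : 'I_n, R i j -> x 0 i = x 0 j).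

(* Synchrony subspace: an A-invariant polydiagonal. With row vectors, the
   action x |-> A x of A on C^n reads x |-> x *m A^T. *)
Definition synchrony_subspace (C : fieldType) (n : nat) (A : 'M[nat]_n)
    (S : 'M[C]_n) : Prop :=
  polydiagonal S /\ (S *m (adjC C A)^T <= S)%MS.

Definition is_eigenvector (C : fieldType) (n : nat) (M : 'M[C]_n)
    (w : 'cV[C]_n) : Prop :=
  w != 0 /\ exists lambda : C, M *m w = lambda *: w.

Definition two_valued (C : fieldType) (n : nat) (w : 'cV[C]_n) : Prop :=
  exists a b : C, [/\ a != b,
    (forall i : 'I_n, w i 0 = a \/ w i 0 = b),
    (exists i : 'I_n, w i 0 = a) & (exists j : 'I_n, w j 0 = b)].

From HB Require Import structures.
From mathcomp Require Import all_boot all_order all_algebra ring.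
Import Order.TTheory GRing.Theory Num.Theory.
Set Implicit Arguments. Unset Strict Implicit. Unset Printing Implicit Defensive.
Local Open Scope ring_scope.

(* Two-dimensional synchrony subspaces of a regular network and two-valued
   eigenvectors are two faces of the same object: a bipartition P of the cells
   that is equitable, i.e. every cell of a given block receives the same number
   of arrows from the block P.
   - The space of vectors constant on each block of P ('blockmx P') is a
     polydiagonal of rank 2, and conversely every rank-2 polydiagonal is such a
     space: a non-constant vector of it already determines the bipartition.
   - In a network of valency v, the adjacency matrix sends the vector equal to
     a on P and b off P to the vector k |-> b v + (a - b) (inflow k), where
     inflow k counts the arrows from P into k.  Hence 'blockmx P' is invariant
     iff P is equitable, and an eigenvector taking two values a != b forces P
     to be equitable.
   - Conversely an equitable bipartition carries a two-valued eigenvector,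
     found by diagonalising the 2x2 quotient matrix of A. *)

Section BlockSpace.
Variables (C : fieldType) (n : nat) (P : pred 'I_n).

Definition blockvec (a b : C) : 'rV[C]_n := \row_k (if P k then a else b).

(* The space of vectors constant on both blocks, spanned by the indicators of
   P (row 0) and of its complement (row 1). *)
Definition blockmx : 'M[C]_(2, n) :=
  \matrix_(r < 2) blockvec (r == 0 :> nat)%:R (r != 0 :> nat)%:R.

Lemma mul_blockmx (D : 'rV[C]_2) :
  D *m blockmx = blockvec (D 0 0) (D 0 (lift 0 0)).
Proof.
apply/rowP => k; rewrite !mxE !big_ord_recl big_ord0 !mxE /=.
by case: (P k); rewrite ?mulr1 ?mulr0 ?addr0 ?add0r.
Qed.

Variables (i0 j0 : 'I_n).
Hypotheses (Pi0 : P i0) (nPj0 : ~~ P j0).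

Lemma sub_blockmx (z : 'rV[C]_n) :
  (z <= blockmx)%MS <-> (forall i j, P i = P j -> z 0 i = z 0 j).
Proof.
split=> [/submxP[D ->] i j Pij | zP].
  by rewrite mul_blockmx !mxE Pij.
have -> : z = blockvec (z 0 i0) (z 0 j0).
  apply/rowP => k; rewrite mxE.
  by case: (boolP (P k)) => Pk; apply: zP; rewrite ?Pk ?Pi0 ?(negbTE Pk) ?(negbTE nPj0).
pose D : 'rV[C]_2 := \row_r (if r == 0 :> nat then z 0 i0 else z 0 j0).
have -> : blockvec (z 0 i0) (z 0 j0) = D *m blockmx by rewrite mul_blockmx !mxE.
exact: submxMl.
Qed.

(* The two indicators are independent: reading them at i0 and j0 gives the
   identity matrix. *)
Lemma rank_blockmx : \rank blockmx = 2.
Proof.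
pose g (s : 'I_2) := if s == 0 :> nat then i0 else j0.
have id2 : colsub g blockmx = 1%:M.
  apply/matrixP => r s; rewrite !mxE /g.
  by case: s => [[|[|s]] hs] //=; rewrite ?Pi0 ?(negbTE nPj0); case: r => [[|[|r]] hr].
apply/eqP; rewrite eqn_leq rank_leq_row /=.
have := mxrankM_maxl blockmx (colsub g 1%:M).
by rewrite mulmx_colsub mulmx1 id2 mxrank1.
Qed.

Lemma blockmx_polydiagonal : polydiagonal <<blockmx>>%MS.
Proof.
exists (fun i j => P i == P j) => x; rewrite genmxE sub_blockmx.
by split=> xP i j /eqP; apply: xP.
Qed.

Lemma blockvec_neq0 (a b : C) : a != b -> (blockvec a b)^T != 0.
Proof.
move=> ab; apply: contraNneq ab => w0.
have := congr1 (fun w : 'cV_n => w i0 0) w0; have := congr1 (fun w : 'cV_n => w j0 0) w0.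
by rewrite !mxE Pi0 (negbTE nPj0) => -> ->.
Qed.

Lemma blockvec_two_valued (a b : C) : a != b -> two_valued (blockvec a b)^T.
Proof.
move=> ab; exists a, b; split=> //.
- by move=> i; rewrite !mxE; case: (P i); [left | right].
- by exists i0; rewrite !mxE Pi0.
- by exists j0; rewrite !mxE (negbTE nPj0).
Qed.

End BlockSpace.

Arguments blockmx {C n} P.

Lemma two_valued_blockvec (C : fieldType) (n : nat) (w : 'cV[C]_n) :
  two_valued w -> exists P : pred 'I_n, exists a b i0 j0,
    [/\ a != b, P i0, ~~ P j0 & w = (blockvec P a b)^T].
Proof.
move=> [a [b [ab wab [i0 wi0] [j0 wj0]]]].
exists [pred k | w k 0 == a], a, b, i0, j0; split; rewrite /= ?wi0 ?wj0 ?eqxx //.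
  by rewrite eq_sym.
apply/matrixP => k l; rewrite !mxE ord1 /=.
by case: eqP => // ne; case: (wab k) => // /ne.
Qed.

Lemma constant_rows_rank (C : fieldType) (m n : nat) (S : 'M[C]_(m, n)) :
  (forall r i j, S r i = S r j) -> (\rank S <= 1)%N.
Proof.
case: n S => [|n] S constS; first exact: leq_trans (rank_leq_col S) _.
apply: leq_trans (rank_leq_row (const_mx 1 : 'rV[C]_n.+1)).
apply/mxrankS/row_subP => r; apply/sub_rVP; exists (S r 0).
by apply/rowP => k; rewrite !mxE mulr1 (constS r k 0).
Qed.

(* A polydiagonal of rank 2 is the space of block-constant vectors of some
   proper bipartition: the level sets of any non-constant vector in it. *)
Lemma polydiagonal_rank2 (C : fieldType) (n : nat) (S : 'M[C]_n) :
  polydiagonal S -> \rank S = 2 ->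
  exists P : pred 'I_n, exists i0 j0, [/\ P i0, ~~ P j0 & (S == blockmx P)%MS].
Proof.
move=> [R SR] rankS.
have /existsP[r /existsP[i0 /existsP[j0 Sij]]] :
    [exists r, exists i, exists j, S r i != S r j].
  apply: contraT => /existsPn noneq.
  suff : (\rank S <= 1)%N by rewrite rankS.
  apply: constant_rows_rank => r i j.
  by move/existsPn/(_ i)/existsPn/(_ j)/negbNE/eqP: (noneq r).
pose P := [pred k | S r k == S r i0].
have Pi0 : P i0 by rewrite /= eqxx.
have nPj0 : ~~ P j0 by rewrite /= eq_sym.
exists P, i0, j0; split=> //.
have Rblocks i j : R i j -> P i = P j.
  by move/(proj1 (SR (row r S)) (row_sub r S)); rewrite !mxE /= => ->.
have BS : (blockmx P <= S)%MS.
  apply/row_subP => s; apply/SR => i j /Rblocks.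
  exact: (sub_blockmx Pi0 nPj0 _).1 (row_sub s _) i j.
apply/andP; split=> //; rewrite -(mxrank_leqif_sup BS).2 rankS.
by rewrite (rank_blockmx C Pi0 nPj0).
Qed.

Section EquitableBipartition.
Variables (n : nat) (A : 'M[nat]_n) (P : pred 'I_n).

Definition inflow (k : 'I_n) : nat := (\sum_(j | P j) A k j)%N.
Definition outflow (k : 'I_n) : nat := (\sum_(j | ~~ P j) A k j)%N.

(* In a regular network, P is an equitable bipartition when the inflow from P
   only depends on the block of the receiving cell (the outflow then does too). *)
Definition equitable : Prop := forall i j, P i = P j -> inflow i = inflow j.

Variable v : nat.
Hypothesis valency : forall k, (\sum_j A k j)%N = v.

Lemma outflowE (C : fieldType) k : (outflow k)%:R = v%:R - (inflow k)%:R :> C.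
Proof.
rewrite -(valency k) (bigID P) /= natrD -/(inflow k) -/(outflow k).
by rewrite (addrC (inflow k)%:R) addrK.
Qed.

Lemma blockvec_adj (C : fieldType) (a b : C) k :
  (blockvec P a b *m (adjC C A)^T) 0 k = b * v%:R + (a - b) * (inflow k)%:R.
Proof.
have -> : (blockvec P a b *m (adjC C A)^T) 0 k = a * (inflow k)%:R + b * (outflow k)%:R.
  rewrite mxE (bigID P) /= !natr_sum !mulr_sumr.
  by congr (_ + _); apply: eq_bigr => j Pj; rewrite !mxE ?Pj ?(negbTE Pj) mulrC.
by rewrite outflowE; ring.
Qed.

Lemma adj_blockvec (C : fieldType) (a b : C) k :
  (adjC C A *m (blockvec P a b)^T) k 0 = b * v%:R + (a - b) * (inflow k)%:R.
Proof. by rewrite -[adjC C A]trmxK -trmx_mul mxE blockvec_adj. Qed.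

Variables (C : numFieldType) (i0 j0 : 'I_n).
Hypotheses (Pi0 : P i0) (nPj0 : ~~ P j0).

Lemma invariant_blockmx_equitable :
  (blockmx P *m (adjC C A)^T <= blockmx P)%MS <-> equitable.
Proof.
split=> [invB i j Pij | equitP].
  have := submx_trans (submxMr (adjC C A)^T (row_sub 0 (blockmx P))) invB.
  move/(sub_blockmx Pi0 nPj0)/(_ i j Pij); rewrite rowK !blockvec_adj /=.
  by rewrite !mul0r subr0 !mul1r !add0r => /eqP; rewrite eqr_nat => /eqP.
apply/row_subP => s; rewrite row_mul rowK.
by apply/(sub_blockmx Pi0 nPj0) => i j Pij; rewrite !blockvec_adj (equitP i j Pij).
Qed.

Lemma eigen_blockvec_equitable (a b lam : C) : a != b ->
  adjC C A *m (blockvec P a b)^T = lam *: (blockvec P a b)^T -> equitable.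
Proof.
move=> ab eig i j Pij.
have entry k : b * v%:R + (a - b) * (inflow k)%:R = lam * (if P k then a else b).
  by rewrite -adj_blockvec eig !mxE.
apply/eqP; rewrite -(eqr_nat C); apply/eqP.
apply: (mulfI (_ : a - b != 0)); first by rewrite subr_eq0.
by apply: (addrI (b * v%:R)); rewrite !entry Pij.
Qed.

(* An equitable bipartition carries a two-valued eigenvector: with p and q the
   inflows of the two blocks, either q = 0 and the indicator of P is an
   eigenvector for p, or the vector equal to outflow i0 on P and to -q off P
   is one for p - q; its two values differ since outflow i0 + q > 0. *)
Lemma equitable_eigenvector : equitable ->
  exists w, is_eigenvector (adjC C A) w /\ two_valued w.
Proof.
move=> equitP; pose p := inflow i0; pose q := inflow j0.
have inflow_block k : inflow k = if P k then p else q.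
  case: (boolP (P k)) => Pk /=; apply: equitP;
  by rewrite ?Pk ?Pi0 ?(negbTE Pk) ?(negbTE nPj0).
suff [a [b [lam [ab eig]]]] : exists a b lam : C, a != b /\
    adjC C A *m (blockvec P a b)^T = lam *: (blockvec P a b)^T.
  exists (blockvec P a b)^T; split; last exact: (blockvec_two_valued Pi0 nPj0 ab).
  split; [exact: (blockvec_neq0 Pi0 nPj0 ab) | by exists lam].
have [q0 | qn0] := eqVneq q 0%N.
  exists 1, 0, p%:R; split; first exact: oner_neq0.
  apply/matrixP => k l; rewrite ord1 adj_blockvec !mxE inflow_block q0.
  by case: (P k); rewrite /= mul0r subr0 add0r mul1r ?mulr1 ?mulr0.
exists (outflow i0)%:R, (- q%:R), (p%:R - q%:R); split.
  by rewrite -subr_eq0 opprK -natrD pnatr_eq0 addn_eq0 negb_and qn0 orbT.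
apply/matrixP => k l; rewrite ord1 adj_blockvec !mxE inflow_block outflowE.
by case: (P k); ring.
Qed.

End EquitableBipartition.

Theorem mainTheorem8 (C : numClosedFieldType) (n : nat) (A : 'M[nat]_n) :
  regular_network A ->
  ((exists S : 'M[C]_n, synchrony_subspace A S /\ \rank S = 2%N) <->
   (exists w : 'cV[C]_n, is_eigenvector (adjC C A) w /\ two_valued w)).
Proof.
move=> [v valency]; split.
-
  move=> [S [[polyS invS] rankS]].
  have [P [i0 [j0 [Pi0 nPj0 /andP[SB BS]]]]] := polydiagonal_rank2 polyS rankS.
  have invB : (blockmx P *m (adjC C A)^T <= blockmx P)%MS.
    exact: submx_trans (submxMr _ BS) (submx_trans invS SB).
  apply: (equitable_eigenvector valency C Pi0 nPj0).
  exact: (invariant_blockmx_equitable valency C Pi0 nPj0).1 invB.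
-
  move=> [w [[_ [lam eig]] /two_valued_blockvec[P [a [b [i0 [j0 [ab Pi0 nPj0 defw]]]]]]]].
  rewrite {}defw in eig.
  exists <<blockmx P>>%MS; split; last by rewrite genmxE (rank_blockmx C Pi0 nPj0).
  split; first exact: (blockmx_polydiagonal C Pi0 nPj0).
  rewrite (eqmxMr _ (genmxE _)) genmxE.
  apply/(invariant_blockmx_equitable valency C Pi0 nPj0).
  exact: (eigen_blockvec_equitable valency ab eig).
Qed.
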